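(* Let $F$ be the elementary cellular automaton with rule number 152. For every nonempty finite word $u\in\{0,1\}^*$, the deterministic communication complexity of $\textsc{SInv}_{F,u}$ restricted to inputs of length $n$ is bounded by a constant independent of $n$.
   Context: An elementary cellular automaton (ECA) with rule number $N\in\{0,\dots,255\}$ is the map $F:\{0,1\}^{\mathbb Z}\to\{0,1\}^{\mathbb Z}$ given by $F(x)_i=f(x_{i-1},x_i,x_{i+1})$. Here the local rule $f:\{0,1\}^3\to\{0,1\}$ is determined by $N=\sum_{a,b,c\in\{0,1\}}2^{4a+2b+c}f(a,b,c)$. For a nonempty finite word $u$, $p_u\in\{0,1\}^{\mathbb Z}$ is defined by $(p_u)_i=u_{i\bmod |u|}$. For a finite word $x$, $p_u[x]$ is the configuration equal to $x$ on positions $0,\dots,|x|-1$ and to $p_u$ elsewhere. $\textsc{SInv}_{F,u}$ is the decision problem: on input a finite word $x$, decide whether there is an integer $w$ such that for all $t\ge0$ the set of positions where $F^t(p_u)$ and $F^t(p_u[x])$ differ is contained in an interval of length $w$. For each $n$, it is regarded as a function $\{0,1\}^n\to\{0,1\}$. For a function $g:X\times Y\to Z$, $D(g)$ is the minimal depth of a deterministic two-party protocol computing $g$. In such a protocol, Alice knows $x$ and Bob knows $y$. The protocol is a binary tree: each internal node is labelled by a function of Alice's input only or of Bob's input only, with values in $\{\text{left},\text{right}\}$, and each leaf is labelled by an output value. For $g:\{0,1\}^m\to Z$, set $D(g)=\max_{0\le i<m}D(g_i)$, where $g_i:\{0,1\}^i\times\{0,1\}^{m-i}\to Z$ is $g_i(x,y)=g(xy)$.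 *)

From Stdlib Require Import ZArith List Bool.
Import ListNotations.
Open Scope Z_scope.

Definition config := Z -> bool.

Definition local_rule (N : nat) (a b c : bool) : bool :=
  Nat.testbit N (4 * Nat.b2n a + 2 * Nat.b2n b + Nat.b2n c).

Definition eca (N : nat) (x : config) : config :=
  fun i => local_rule N (x (i - 1)) (x i) (x (i + 1)).

Definition eca_iter (N : nat) (t : nat) (x : config) : config :=
  Nat.iter t (eca N) x.

Definition periodic (u : list bool) : config :=
  fun i => nth (Z.to_nat (i mod Z.of_nat (length u))) u false.

Definition patch (u x : list bool) : config :=
  fun i => if (0 <=? i) && (i <? Z.of_nat (length x))
           then nth (Z.to_nat i) x false
           else periodic u i.

Definition SInv (N : nat) (u x : list bool) : Prop :=
  exists w : Z, forall t : nat, exists a : Z, forall i : Z,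
    eca_iter N t (periodic u) i <> eca_iter N t (patch u x) i ->
    a <= i <= a + w.

Inductive protocol (X Y : Type) : Type :=
| Leaf : bool -> protocol X Y
| NodeA : (X -> bool) -> protocol X Y -> protocol X Y -> protocol X Y
| NodeB : (Y -> bool) -> protocol X Y -> protocol X Y -> protocol X Y.
Arguments Leaf {X Y}.
Arguments NodeA {X Y}.
Arguments NodeB {X Y}.

Fixpoint run {X Y} (p : protocol X Y) (x : X) (y : Y) : bool :=
  match p with
  | Leaf z => z
  | NodeA f l r => if f x then run l x y else run r x y
  | NodeB g l r => if g y then run l x y else run r x y
  end.

Fixpoint depth {X Y} (p : protocol X Y) : nat :=
  match p with
  | Leaf _ => 0
  | NodeA _ l r => S (Nat.max (depth l) (depth r))
  | NodeB _ l r => S (Nat.max (depth l) (depth r))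
  end.

(* D(g_i) <= k for g_i : {0,1}^i x {0,1}^(m-i) -> bool, g given as a
   predicate on words of length m (output true iff predicate holds). *)
Definition D_split_le (g : list bool -> Prop) (m i k : nat) : Prop :=
  exists p : protocol (list bool) (list bool),
    (depth p <= k)%nat /\
    forall x y : list bool, length x = i -> length y = (m - i)%nat ->
      (run p x y = true <-> g (x ++ y)).

Definition D_le (g : list bool -> Prop) (m k : nat) : Prop :=
  forall i : nat, (i < m)%nat -> D_split_le g m i k.

From Stdlib Require Import ZArith List Bool Lia.
Open Scope Z_scope.

(* Rule 152 is [f(a,b,c) = bc || a(~b)(~c)].  On a configuration in which every
   1 is followed by two 0s it acts as the right shift, and a configuration with
   a 0 in every window of length k+1 reaches that form after k steps.  So if u
   contains a 0, both p_u and p_u[x] are eventually shifted rigidly, and before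
   that their difference spreads at speed 1: SInv always holds.  If u = 1^m,
   the rightmost 0 of p_u[x] stays put while the leftmost 0 moves left at each
   step, so SInv holds iff x has no 0.  Either way a protocol of depth 2
   (each party tests whether its half is all ones) decides SInv. *)

Lemma eca_iter_succ N t c : eca_iter N (S t) c = eca N (eca_iter N t c).
Proof. reflexivity. Qed.

Lemma eca_iter_add N s t c : eca_iter N (s + t) c = eca_iter N s (eca_iter N t c).
Proof. apply Nat.iter_add. Qed.

Definition agree_outside (a b : Z) (c d : config) : Prop :=
  forall i, i < a \/ b < i -> c i = d i.

Definition diff_within (w : Z) (c d : config) : Prop :=
  exists a, forall i, c i <> d i -> a <= i <= a + w.

Lemma agree_outside_eca N a b c d :
  agree_outside a b c d -> agree_outside (a - 1) (b + 1) (eca N c) (eca N d).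
Proof. intros H i Hi. unfold eca. rewrite !H by lia. reflexivity. Qed.

Lemma agree_outside_iter N a b c d t :
  agree_outside a b c d ->
  agree_outside (a - Z.of_nat t) (b + Z.of_nat t) (eca_iter N t c) (eca_iter N t d).
Proof.
  intro H. induction t as [|t IH]; intros i Hi.
  - apply H. lia.
  - rewrite !eca_iter_succ. apply (agree_outside_eca N _ _ _ _ IH). lia.
Qed.

Lemma diff_within_agree_outside a b c d :
  agree_outside a b c d -> diff_within (b - a) c d.
Proof.
  intro H. exists a. intros i Hi.
  destruct (Z_lt_le_dec i a); [exfalso; apply Hi, H; lia|].
  destruct (Z_lt_le_dec b i); [exfalso; apply Hi, H; lia | lia].
Qed.

Lemma diff_within_le w w' c d : w <= w' -> diff_within w c d -> diff_within w' c d.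
Proof. intros Hw [a Ha]. exists a. intros i Hi. specialize (Ha i Hi). lia. Qed.

Lemma local_rule_152 a b c :
  local_rule 152 a b c = (b && c) || (a && negb b && negb c).
Proof. destruct a, b, c; reflexivity. Qed.

Lemma eca_152 c i :
  eca 152 c i = (c i && c (i + 1)) || (c (i - 1) && negb (c i) && negb (c (i + 1))).
Proof. apply local_rule_152. Qed.

Lemma eca152_true_true c i : c i = true -> c (i + 1) = true -> eca 152 c i = true.
Proof. intros H1 H2. rewrite eca_152, H1, H2. now destruct (c (i - 1)). Qed.

Lemma eca152_false_true c i : c i = false -> c (i + 1) = true -> eca 152 c i = false.
Proof. intros H1 H2. rewrite eca_152, H1, H2. now destruct (c (i - 1)). Qed.

Lemma eca152_true_false c i : c i = true -> c (i + 1) = false -> eca 152 c i = false.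
Proof. intros H1 H2. rewrite eca_152, H1, H2. now destruct (c (i - 1)). Qed.

Definition sparse (c : config) : Prop :=
  forall i, c i = true -> c (i + 1) = false /\ c (i + 2) = false.

Lemma eca152_sparse_shift c : sparse c -> forall i, eca 152 c i = c (i - 1).
Proof.
  intros Hc i. rewrite eca_152.
  destruct (c (i - 1)) eqn:Eprev.
  - destruct (Hc _ Eprev) as [H1 H2].
    replace (i - 1 + 1) with i in H1 by ring. replace (i - 1 + 2) with (i + 1) in H2 by ring.
    now rewrite H1, H2.
  - destruct (c i) eqn:Ei; [|reflexivity].
    now rewrite (proj1 (Hc _ Ei)).
Qed.

Lemma sparse_eca152 c : sparse c -> sparse (eca 152 c).
Proof.
  intros Hc i. rewrite !(eca152_sparse_shift c Hc). intro H.
  replace (i + 1 - 1) with (i - 1 + 1) by ring. replace (i + 2 - 1) with (i - 1 + 2) by ring.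
  now apply Hc.
Qed.

Lemma eca152_iter_sparse_shift c :
  sparse c -> forall t i, eca_iter 152 t c i = c (i - Z.of_nat t).
Proof.
  intros Hc t. induction t as [|t IH]; intro i.
  - simpl. f_equal. lia.
  - assert (Ht : sparse (eca_iter 152 t c)).
    { clear IH. induction t; [exact Hc | now apply sparse_eca152]. }
    rewrite eca_iter_succ, (eca152_sparse_shift _ Ht), IH. f_equal. lia.
Qed.

Lemma agree_outside_iter_sparse a b c d t :
  sparse c -> sparse d -> agree_outside a b c d ->
  agree_outside (a + Z.of_nat t) (b + Z.of_nat t) (eca_iter 152 t c) (eca_iter 152 t d).
Proof.
  intros Hc Hd H i Hi. rewrite !eca152_iter_sparse_shift by assumption. apply H. lia.
Qed.

Definition zeros_within (k : nat) (c : config) : Prop :=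
  forall i, exists j, i <= j <= i + Z.of_nat k /\ c j = false.

Lemma zeros_within_le k k' c : (k <= k')%nat -> zeros_within k c -> zeros_within k' c.
Proof. intros Hk Hc i. destruct (Hc i) as [j [Hj Hcj]]. exists j. split; [lia | exact Hcj]. Qed.

Lemma zeros_within_agree_outside k L a b c d :
  zeros_within k c -> agree_outside a b c d -> b - a < Z.of_nat L ->
  zeros_within (L + 2 * k) d.
Proof.
  intros Hc H HL i.
  destruct (Z_lt_le_dec (i + Z.of_nat k) a) as [Hleft|Hleft];
    [|destruct (Z_lt_le_dec b i) as [Hright|Hright]].
  - destruct (Hc i) as [j [Hj Hcj]]. exists j. rewrite <- H by lia. split; [lia | exact Hcj].
  - destruct (Hc i) as [j [Hj Hcj]]. exists j. rewrite <- H by lia. split; [lia | exact Hcj].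
  - destruct (Hc (b + 1)) as [j [Hj Hcj]]. exists j. rewrite <- H by lia. split; [lia | exact Hcj].
Qed.

Lemma zeros_within_1_sparse c : zeros_within 1 c -> sparse (eca 152 c).
Proof.
  intros Hc i. rewrite !eca_152.
  assert (Hno11 : forall j, c j && c (j + 1) = false).
  { intro j. destruct (Hc j) as [k [Hk Hck]].
    assert (k = j \/ k = j + 1) as [-> | ->] by lia; rewrite Hck; [reflexivity | apply andb_false_r]. }
  rewrite !Hno11. simpl. intros [[_ Hi]%andb_prop Hi1]%andb_prop.
  apply negb_true_iff in Hi. apply negb_true_iff in Hi1.
  replace (i + 1 - 1) with i by ring. replace (i + 2 - 1) with (i + 1) by ring.
  now rewrite Hi, Hi1.
Qed.

Lemma exists_block_end (c : config) n i :
  c i = true -> c (i + Z.of_nat (S n)) = false ->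
  exists j, i <= j <= i + Z.of_nat n /\ c j = true /\ c (j + 1) = false.
Proof.
  revert i. induction n as [|n IH]; intros i Hi Hend.
  - exists i. split; [lia|]. split; [exact Hi|]. now replace (i + 1) with (i + Z.of_nat 1) by lia.
  - destruct (c (i + 1)) eqn:Enext.
    + destruct (IH (i + 1) Enext) as [j [Hj Hcj]].
      { now replace (i + 1 + Z.of_nat (S n)) with (i + Z.of_nat (S (S n))) by lia. }
      exists j. split; [lia | exact Hcj].
    + exists i. split; [lia | auto].
Qed.

Lemma zeros_within_eca152 k c : zeros_within (S (S k)) c -> zeros_within (S k) (eca 152 c).
Proof.
  intros Hc i.
  destruct (c i) eqn:Ei; [|destruct (c (i + 1)) eqn:Ei1].
  - destruct (Hc i) as [j0 [Hj0 Hcj0]].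
    assert (j0 <> i) by (intros ->; congruence).
    destruct (exists_block_end c (Z.to_nat (j0 - i - 1)) i Ei) as [j [Hj [Hcj Hcj1]]].
    { now replace (i + Z.of_nat (S (Z.to_nat (j0 - i - 1)))) with j0 by lia. }
    exists j. split; [lia | now apply eca152_true_false].
  - exists i. split; [lia | now apply eca152_false_true].
  - exists (i + 1). split; [lia|]. rewrite eca_152, Ei1.
    now replace (i + 1 - 1) with i by ring; rewrite Ei.
Qed.

Lemma zeros_within_sparse_iter k c : zeros_within (S k) c -> sparse (eca_iter 152 (S k) c).
Proof.
  revert c. induction k as [|k IH]; intros c Hc.
  - now apply zeros_within_1_sparse.
  - unfold eca_iter. rewrite Nat.iter_succ_r. apply IH. now apply zeros_within_eca152.
Qed.

Lemma eca152_bounded_diff k a b c d :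
  zeros_within (S k) c -> zeros_within (S k) d -> agree_outside a b c d ->
  exists w, forall t, diff_within w (eca_iter 152 t c) (eca_iter 152 t d).
Proof.
  intros Hc Hd H. exists (b - a + 2 * Z.of_nat (S k)). intro t.
  destruct (le_lt_dec t (S k)) as [Ht|Ht].
  - eapply diff_within_le, diff_within_agree_outside, (agree_outside_iter 152 _ _ _ _ t H). lia.
  - (* after S k steps both iterates are sparse, hence shifted rigidly *)
    replace t with ((t - S k) + S k)%nat by lia. rewrite !eca_iter_add.
    pose proof (agree_outside_iter_sparse _ _ _ _ (t - S k)
                  (zeros_within_sparse_iter k c Hc) (zeros_within_sparse_iter k d Hd)
                  (agree_outside_iter 152 _ _ _ _ (S k) H)) as Hlate.
    eapply diff_within_le, diff_within_agree_outside, Hlate. lia.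
Qed.

Lemma eca152_iter_const_true c :
  (forall i, c i = true) -> forall t i, eca_iter 152 t c i = true.
Proof.
  intros Hc t. induction t as [|t IH]; intro i; [apply Hc|].
  rewrite eca_iter_succ. now apply eca152_true_true.
Qed.

Lemma eca152_iter_rightmost_false c r :
  c r = false -> (forall i, r < i -> c i = true) ->
  forall t, eca_iter 152 t c r = false /\ (forall i, r < i -> eca_iter 152 t c i = true).
Proof.
  intros Hr Hright t. induction t as [|t [IHr IHright]]; [split; assumption|].
  rewrite !eca_iter_succ. split.
  - apply eca152_false_true; [exact IHr | apply IHright; lia].
  - intros i Hi. apply eca152_true_true; apply IHright; lia.
Qed.

Lemma eca152_iter_leftmost_false c l :
  c l = false -> (forall i, i < l -> c i = true) ->
  forall t, eca_iter 152 t c (l - Z.of_nat t) = false /\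
            (forall i, i < l - Z.of_nat t -> eca_iter 152 t c i = true).
Proof.
  intros Hl Hleft t. induction t as [|t [IHl IHleft]].
  - simpl. replace (l - 0) with l by ring. split; assumption.
  - rewrite !eca_iter_succ. split.
    + apply eca152_true_false; [apply IHleft; lia|].
      now replace (l - Z.of_nat (S t) + 1) with (l - Z.of_nat t) by lia.
    + intros i Hi. apply eca152_true_true; apply IHleft; lia.
Qed.

Lemma exists_rightmost_false (c : config) p n :
  c p = false -> (forall i, p + Z.of_nat n < i -> c i = true) ->
  exists r, c r = false /\ forall i, r < i -> c i = true.
Proof.
  intro Hp. induction n as [|n IH]; intro Hright.
  - exists p. split; [exact Hp|]. intros i Hi. apply Hright. lia.
  - destruct (c (p + Z.of_nat (S n))) eqn:E.
    + apply IH. intros i Hi.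
      destruct (Z.eq_dec i (p + Z.of_nat (S n))) as [-> | Hne]; [exact E | apply Hright; lia].
    + exists (p + Z.of_nat (S n)). split; [exact E | exact Hright].
Qed.

Lemma exists_leftmost_false (c : config) p n :
  c p = false -> (forall i, i < p - Z.of_nat n -> c i = true) ->
  exists l, c l = false /\ forall i, i < l -> c i = true.
Proof.
  intro Hp. induction n as [|n IH]; intro Hleft.
  - exists p. split; [exact Hp|]. intros i Hi. apply Hleft. lia.
  - destruct (c (p - Z.of_nat (S n))) eqn:E.
    + apply IH. intros i Hi.
      destruct (Z.eq_dec i (p - Z.of_nat (S n))) as [-> | Hne]; [exact E | apply Hleft; lia].
    + exists (p - Z.of_nat (S n)). split; [exact E | exact Hleft].
Qed.

Lemma eca152_unbounded_diff a b c d p :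
  (forall i, c i = true) -> d p = false -> agree_outside a b c d ->
  ~ exists w, forall t, diff_within w (eca_iter 152 t c) (eca_iter 152 t d).
Proof.
  intros Hc Hp H [w Hw].
  assert (Hd : forall i, i < a \/ b < i -> d i = true) by (intros i Hi; rewrite <- H; auto).
  destruct (exists_rightmost_false d p (Z.to_nat (b - p)) Hp) as [r [Hr Hright]].
  { intros i Hi. apply Hd. lia. }
  destruct (exists_leftmost_false d p (Z.to_nat (p - a)) Hp) as [l [Hl Hleft]].
  { intros i Hi. apply Hd. lia. }
  assert (Hlr : l <= r).
  { destruct (Z_le_gt_dec l r) as [?|Hrl]; [assumption|]. rewrite Hright in Hl by lia. discriminate. }
  set (t := S (Z.to_nat w)).
  destruct (Hw t) as [a' Ha'].
  pose proof (Ha' r) as Hdiff_r. pose proof (Ha' (l - Z.of_nat t)) as Hdiff_l.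
  rewrite eca152_iter_const_true, (proj1 (eca152_iter_rightmost_false d r Hr Hright t))
    in Hdiff_r by exact Hc.
  rewrite eca152_iter_const_true, (proj1 (eca152_iter_leftmost_false d l Hl Hleft t))
    in Hdiff_l by exact Hc.
  specialize (Hdiff_r ltac:(discriminate)). specialize (Hdiff_l ltac:(discriminate)).
  unfold t in *. lia.
Qed.

Lemma periodic_zeros_within u : In false u -> zeros_within (length u - 1) (periodic u).
Proof.
  intros Hu i. destruct (In_nth u false false Hu) as [z [Hz Hnz]].
  assert (Hlen : 0 < Z.of_nat (length u)) by lia.
  pose proof (Z.mod_pos_bound (Z.of_nat z - i) _ Hlen).
  exists (i + (Z.of_nat z - i) mod Z.of_nat (length u)). split; [lia|].
  unfold periodic. rewrite Z.add_mod_idemp_r by lia.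
  replace (i + (Z.of_nat z - i)) with (Z.of_nat z) by ring.
  rewrite Z.mod_small, Nat2Z.id by lia. exact Hnz.
Qed.

Lemma periodic_all_true u : u <> nil -> ~ In false u -> forall i, periodic u i = true.
Proof.
  intros Hne Hu i. unfold periodic.
  assert (Hlen : 0 < Z.of_nat (length u)) by (destruct u; [congruence | simpl; lia]).
  pose proof (Z.mod_pos_bound i _ Hlen).
  destruct (nth _ u false) eqn:E; [reflexivity|].
  exfalso. apply Hu. rewrite <- E. apply nth_In. lia.
Qed.

Lemma patch_agree_outside u x :
  agree_outside 0 (Z.of_nat (length x) - 1) (periodic u) (patch u x).
Proof.
  intros i Hi. unfold patch.
  replace ((0 <=? i) && (i <? Z.of_nat (length x))) with false; [reflexivity|].
  symmetry. apply andb_false_iff.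
  destruct Hi; [left; apply Z.leb_gt | right; apply Z.ltb_ge]; lia.
Qed.

Lemma patch_inside u x i :
  0 <= i < Z.of_nat (length x) -> patch u x i = nth (Z.to_nat i) x false.
Proof.
  intro Hi. unfold patch.
  replace ((0 <=? i) && (i <? Z.of_nat (length x))) with true; [reflexivity|].
  symmetry. apply andb_true_intro. split; [apply Z.leb_le | apply Z.ltb_lt]; lia.
Qed.

Lemma sinv152_of_zero u x : In false u -> SInv 152 u x.
Proof.
  intro Hu. set (k := (length x + 2 * (length u - 1))%nat).
  assert (Hper : zeros_within (S k) (periodic u)).
  { apply (zeros_within_le (length u - 1)); [lia | now apply periodic_zeros_within]. }
  assert (Hpatch : zeros_within (S k) (patch u x)).
  { apply (zeros_within_le k); [lia|].
    apply (zeros_within_agree_outside _ _ _ _ _ _ (periodic_zeros_within u Hu)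
             (patch_agree_outside u x)). lia. }
  exact (eca152_bounded_diff k _ _ _ _ Hper Hpatch (patch_agree_outside u x)).
Qed.

Lemma forallb_id_false_In (x : list bool) : forallb (fun b => b) x = false -> In false x.
Proof.
  induction x as [|[] x IH]; simpl; [discriminate | auto | auto].
Qed.

Lemma sinv152_all_true_iff u x :
  u <> nil -> ~ In false u -> SInv 152 u x <-> forallb (fun b => b) x = true.
Proof.
  intros Hne Hu. pose proof (periodic_all_true u Hne Hu) as Hper. split.
  - intro Hsinv. destruct (forallb _ x) eqn:E; [reflexivity|].
    destruct (In_nth x false false (forallb_id_false_In x E)) as [p [Hp Hnp]].
    assert (Hzero : patch u x (Z.of_nat p) = false)
      by (now rewrite patch_inside, Nat2Z.id by lia).
    exfalso. exact (eca152_unbounded_diff _ _ _ _ _ Hper Hzero (patch_agree_outside u x) Hsinv).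
  - intro Hx. rewrite forallb_forall in Hx.
    assert (Hpatch : forall i, patch u x i = true).
    { intro i. destruct (Z_le_gt_dec 0 i); [destruct (Z_lt_ge_dec i (Z.of_nat (length x)))|].
      - rewrite patch_inside by lia. apply Hx, nth_In. lia.
      - rewrite <- patch_agree_outside by lia. apply Hper.
      - rewrite <- patch_agree_outside by lia. apply Hper. }
    exists 0. intro t. exists 0. intros i Hi. exfalso. apply Hi.
    now rewrite !eca152_iter_const_true.
Qed.

Lemma D_le_of_forall (g : list bool -> Prop) m k : (forall w, g w) -> D_le g m k.
Proof.
  intros Hg i _. exists (Leaf true). split; [simpl; lia|].
  intros x y _ _. simpl. split; auto.
Qed.

Lemma D_le_of_and (g : list bool -> Prop) (p q : list bool -> bool) m :
  (forall x y, g (x ++ y) <-> p x = true /\ q y = true) -> D_le g m 2.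
Proof.
  intros Hg i _. exists (NodeA p (NodeB q (Leaf true) (Leaf false)) (Leaf false)).
  split; [simpl; lia|]. intros x y _ _. rewrite Hg. simpl.
  destruct (p x), (q y); intuition congruence.
Qed.

Theorem mainTheorem18 :
  forall u : list bool, u <> nil ->
  exists C : nat, forall n : nat, D_le (SInv 152 u) n C.
Proof.
  intros u Hne. exists 2%nat. intro n.
  destruct (in_dec bool_dec false u) as [Hzero|Hones].
  - apply D_le_of_forall. intro x. now apply sinv152_of_zero.
  - apply (D_le_of_and _ (forallb (fun b => b)) (forallb (fun b => b))). intros x y.
    rewrite sinv152_all_true_iff, forallb_app, andb_true_iff by assumption. reflexivity.
Qed.
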